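(* There exists a mapping $\varrho$ on finite timed HT-traces $\mathbf{M}$ (preserving the length $\lambda\ge0$) such that for every metric formula $\varphi$ and every $k\in[0,\lambda)$: $\mathbf{M},k\models\varphi$ iff $\varrho(\mathbf{M}),\lambda-1-k\models\sigma(\varphi)$.
   Context: Metric formulas over $\mathcal{A}$: $\varphi ::= p \mid \bot \mid \varphi_1\otimes\varphi_2 \mid \bullet_I\varphi \mid \varphi_1\,\mathsf{S}_I\,\varphi_2 \mid \varphi_1\,\mathsf{T}_I\,\varphi_2 \mid \bigcirc_I\varphi \mid \varphi_1\,\mathsf{U}_I\,\varphi_2 \mid \varphi_1\,\mathsf{R}_I\,\varphi_2$, $\otimes\in\{\to,\wedge,\vee\}$, $I=[m,n)$, $m\in\mathbb{N}$, $n\in\mathbb{N}\cup\{\omega\}$. Derived: $\neg\varphi=\varphi\to\bot$, $\top=\neg\bot$, $\blacksquare_I\varphi=\bot\,\mathsf{T}_I\,\varphi$, eventually before $=\top\,\mathsf{S}_I\,\varphi$, $\widehat{\bullet}_I\varphi=\bullet_I\varphi\vee\neg\bullet_I\top$, $\Box_I\varphi=\bot\,\mathsf{R}_I\,\varphi$, $\Diamond_I\varphi=\top\,\mathsf{U}_I\,\varphi$, $\widehat{\bigcirc}_I\varphi=\bigcirc_I\varphi\vee\neg\bigcirc_I\top$. Timed HT-trace $\mathbf{M}=(\langle\mathbf{H},\mathbf{T}\rangle,\tau)$ of length $\lambda$: $H_i\subseteq T_i\subseteq\mathcal{A}$, $\tau:[0,\lambda)\to\mathbb{N}$, $\tau(0)=0$,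 $\tau(i)\le\tau(i+1)$. Satisfaction at $k$: $\bot$ never; $p$ iff $p\in H_k$; $\wedge,\vee$ usual; $\varphi\to\psi$ iff for both $\mathbf{M}'=\mathbf{M}$ and $\mathbf{M}'=(\langle\mathbf{T},\mathbf{T}\rangle,\tau)$, $\mathbf{M}',k\not\models\varphi$ or $\mathbf{M}',k\models\psi$; $\bullet_I\varphi$: $k>0$, $\varphi$ at $k-1$, $\tau(k)-\tau(k-1)\in I$; $\varphi\,\mathsf{S}_I\,\psi$: some $j\in[0,k]$ with $\tau(k)-\tau(j)\in I$, $\psi$ at $j$, $\varphi$ at all $i\in(j,k]$; $\varphi\,\mathsf{T}_I\,\psi$: for all such $j$, $\psi$ at $j$ or $\varphi$ at some $i\in(j,k]$; $\bigcirc_I\varphi$: $k+1<\lambda$, $\varphi$ at $k+1$, $\tau(k+1)-\tau(k)\in I$; $\varphi\,\mathsf{U}_I\,\psi$: some $j\in[k,\lambda)$ with $\tau(j)-\tau(k)\in I$, $\psi$ at $j$, $\varphi$ at all $i\in[k,j)$; $\varphi\,\mathsf{R}_I\,\psi$: for all such $j$, $\psi$ at $j$ or $\varphi$ at some $i\in[k,j)$. $\sigma(\varphi)$ replaces each connective by its swapped-time version: $\mathsf{U}_I/\mathsf{S}_I$, $\mathsf{R}_I/\mathsf{T}_I$, $\bigcirc_I/\bullet_I$, $\widehat{\bigcirc}_I/\widehat{\bullet}_I$, $\Box_I/\blacksquare_I$, $\Diamond_I$ / eventually before ($\top\,\mathsf{S}_I\,\cdot$). *)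

From Stdlib Require Import Arith.

Set Implicit Arguments.

(* Interval I = [m, n) with m : nat and n : nat or omega (None = omega). *)
Record interval := Intv { ilo : nat; ihi : option nat }.

Definition in_intv (I : interval) (d : nat) : Prop :=
  ilo I <= d /\ match ihi I with None => True | Some n => d < n end.

Inductive formula (A : Type) : Type :=
| FAtom : A -> formula A
| FBot : formula A
| FImpl : formula A -> formula A -> formula A
| FAnd : formula A -> formula A -> formula A
| FOr : formula A -> formula A -> formula A
| FPrev : interval -> formula A -> formula A
| FSince : interval -> formula A -> formula A -> formula A
| FTrigger : interval -> formula A -> formula A -> formula A
| FNext : interval -> formula A -> formula A
| FUntil : interval -> formula A -> formula A -> formula A
| FRelease : interval -> formula A -> formula A -> formula A.

Arguments FBot {A}.

Record trace (A : Type) := Trace {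
  len : nat;
  Hs : nat -> A -> Prop;
  Ts : nat -> A -> Prop;
  tau : nat -> nat }.

Definition valid_trace (A : Type) (M : trace A) : Prop :=
  (forall i, i < len M -> forall p, Hs M i p -> Ts M i p) /\
  (0 < len M -> tau M 0 = 0) /\
  (forall i, i + 1 < len M -> tau M i <= tau M (i + 1)).

(* Satisfaction; H is the current "here" valuation (H of M, or T of M). *)
Fixpoint sat_gen (A : Type) (H T : nat -> A -> Prop) (tau : nat -> nat)
  (lam : nat) (k : nat) (phi : formula A) {struct phi} : Prop :=
  match phi with
  | FAtom p => H k p
  | FBot => False
  | FAnd f g => sat_gen H T tau lam k f /\ sat_gen H T tau lam k g
  | FOr f g => sat_gen H T tau lam k f \/ sat_gen H T tau lam k g
  | FImpl f g =>
      (~ sat_gen H T tau lam k f \/ sat_gen H T tau lam k g) /\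
      (~ sat_gen T T tau lam k f \/ sat_gen T T tau lam k g)
  | FPrev J f =>
      0 < k /\ sat_gen H T tau lam (k - 1) f /\ in_intv J (tau k - tau (k - 1))
  | FSince J f g =>
      exists j, j <= k /\ in_intv J (tau k - tau j) /\ sat_gen H T tau lam j g /\
        forall i, j < i -> i <= k -> sat_gen H T tau lam i f
  | FTrigger J f g =>
      forall j, j <= k -> in_intv J (tau k - tau j) ->
        sat_gen H T tau lam j g \/
        exists i, j < i /\ i <= k /\ sat_gen H T tau lam i f
  | FNext J f =>
      k + 1 < lam /\ sat_gen H T tau lam (k + 1) f /\ in_intv J (tau (k + 1) - tau k)
  | FUntil J f g =>
      exists j, k <= j /\ j < lam /\ in_intv J (tau j - tau k) /\
        sat_gen H T tau lam j g /\
        forall i, k <= i -> i < j -> sat_gen H T tau lam i f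
  | FRelease J f g =>
      forall j, k <= j -> j < lam -> in_intv J (tau j - tau k) ->
        sat_gen H T tau lam j g \/
        exists i, k <= i /\ i < j /\ sat_gen H T tau lam i f
  end.

Definition sat (A : Type) (M : trace A) (k : nat) (phi : formula A) : Prop :=
  sat_gen (Hs M) (Ts M) (tau M) (len M) k phi.

Fixpoint sigma (A : Type) (phi : formula A) : formula A :=
  match phi with
  | FAtom p => FAtom p
  | FBot => FBot
  | FImpl f g => FImpl (sigma f) (sigma g)
  | FAnd f g => FAnd (sigma f) (sigma g)
  | FOr f g => FOr (sigma f) (sigma g)
  | FPrev J f => FNext J (sigma f)
  | FSince J f g => FUntil J (sigma f) (sigma g)
  | FTrigger J f g => FRelease J (sigma f) (sigma g)
  | FNext J f => FPrev J (sigma f)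
  | FUntil J f g => FSince J (sigma f) (sigma g)
  | FRelease J f g => FTrigger J (sigma f) (sigma g)
  end.

(* Reflect the trace: position i becomes lam - 1 - i, and the new timing
   tau'(i) = tau(lam - 1) - tau(lam - 1 - i) starts at 0, is monotone, and
   preserves every delay between two positions (up to reflecting them).  The
   past clause of each operator at k therefore coincides with the future
   clause of its mirror at lam - 1 - k.  Since "mirror image" is a symmetric
   relation, both for valuations and for timings, only the three past-to-future
   clauses have to be checked; the future-to-past ones follow by symmetry. *)
From Stdlib Require Import Arith Lia.

Lemma mirror_involutive (n i : nat) : i < n -> n - 1 - (n - 1 - i) = i.
Proof. lia. Qed.

Lemma mirror_onto {n i : nat} : i < n -> exists j, j < n /\ i = n - 1 - j.
Proof. intros Hi. exists (n - 1 - i). split; lia. Qed.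

Definition mirrors (n : nat) (P P' : nat -> Prop) : Prop :=
  forall i, i < n -> (P i <-> P' (n - 1 - i)).

Definition mirror_timing (n : nat) (t s : nat -> nat) : Prop :=
  forall j k, j <= k -> k < n -> s (n - 1 - j) - s (n - 1 - k) = t k - t j.

Lemma mirrors_sym {n : nat} {P P' : nat -> Prop} :
  mirrors n P P' -> mirrors n P' P.
Proof.
  intros HP i Hi. rewrite (HP (n - 1 - i)), mirror_involutive by lia.
  reflexivity.
Qed.

Lemma mirror_timing_sym {n : nat} {t s : nat -> nat} :
  mirror_timing n t s -> mirror_timing n s t.
Proof.
  intros Hts j k Hjk Hkn.
  rewrite <- (Hts (n - 1 - k) (n - 1 - j)), !mirror_involutive by lia.
  reflexivity.
Qed.

(* The temporal clauses of [sat_gen], verbatim, so that each case of the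
   induction in [sat_gen_sigma_mirror] closes by conversion. *)
Definition prev_at (t : nat -> nat) (J : interval) (P : nat -> Prop) (k : nat) :=
  0 < k /\ P (k - 1) /\ in_intv J (t k - t (k - 1)).

Definition next_at (t : nat -> nat) (lam : nat) (J : interval) (P : nat -> Prop)
  (k : nat) :=
  k + 1 < lam /\ P (k + 1) /\ in_intv J (t (k + 1) - t k).

Definition since_at (t : nat -> nat) (J : interval) (P Q : nat -> Prop) (k : nat) :=
  exists j, j <= k /\ in_intv J (t k - t j) /\ Q j /\
    forall i, j < i -> i <= k -> P i.

Definition until_at (t : nat -> nat) (lam : nat) (J : interval) (P Q : nat -> Prop)
  (k : nat) :=
  exists j, k <= j /\ j < lam /\ in_intv J (t j - t k) /\ Q j /\
    forall i, k <= i -> i < j -> P i.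

Definition trigger_at (t : nat -> nat) (J : interval) (P Q : nat -> Prop) (k : nat) :=
  forall j, j <= k -> in_intv J (t k - t j) ->
    Q j \/ exists i, j < i /\ i <= k /\ P i.

Definition release_at (t : nat -> nat) (lam : nat) (J : interval) (P Q : nat -> Prop)
  (k : nat) :=
  forall j, k <= j -> j < lam -> in_intv J (t j - t k) ->
    Q j \/ exists i, k <= i /\ i < j /\ P i.

Section PastToFuture.
Context {n : nat} {t s : nat -> nat} (J : interval) {P P' Q Q' : nat -> Prop}.
Hypothesis Hts : mirror_timing n t s.
Hypothesis HP : mirrors n P P'.
Hypothesis HQ : mirrors n Q Q'.

Lemma prev_next_mirror (k : nat) : k < n ->
  prev_at t J P k <-> next_at s n J P' (n - 1 - k).
Proof.
  intros Hk. unfold prev_at, next_at. split.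
  - intros (Hk0 & HPk & HJ).
    replace (n - 1 - k + 1) with (n - 1 - (k - 1)) by lia. rewrite Hts by lia.
    split; [lia | split; [apply (HP (k - 1)); [lia | assumption] | assumption]].
  - intros (Hk1 & HPk & HJ).
    replace (n - 1 - k + 1) with (n - 1 - (k - 1)) in HPk, HJ by lia.
    rewrite Hts in HJ by lia.
    split; [lia | split; [apply (HP (k - 1)); [lia | assumption] | assumption]].
Qed.

Lemma since_until_mirror (k : nat) : k < n ->
  since_at t J P Q k <-> until_at s n J P' Q' (n - 1 - k).
Proof.
  intros Hk. split.
  - intros (j & Hjk & HJ & HQj & HPi). exists (n - 1 - j).
    rewrite Hts by lia.
    split; [lia | split; [lia | split; [assumption | split]]].
    + apply (HQ j); [lia | assumption].
    + intros i' Hi'1 Hi'2.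
      destruct (mirror_onto (n := n) (i := i') ltac:(lia)) as (i & Hi & ->).
      apply (HP i); [lia | apply HPi; lia].
  - intros (j' & Hkj' & Hj' & HJ & HQj' & HPi).
    destruct (mirror_onto Hj') as (j & Hj & ->). exists j.
    rewrite Hts in HJ by lia.
    split; [lia | split; [assumption | split]].
    + apply (HQ j); [lia | assumption].
    + intros i Hi1 Hi2. apply (HP i); [lia | apply HPi; lia].
Qed.

Lemma trigger_release_mirror (k : nat) : k < n ->
  trigger_at t J P Q k <-> release_at s n J P' Q' (n - 1 - k).
Proof.
  intros Hk. split.
  - intros Htr j' Hkj' Hj' HJ. destruct (mirror_onto Hj') as (j & Hj & ->).
    rewrite Hts in HJ by lia.
    destruct (Htr j ltac:(lia) HJ) as [HQj | (i & Hji & Hik & HPi)].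
    + left. apply (HQ j); [lia | assumption].
    + right. exists (n - 1 - i).
      split; [lia | split; [lia | apply (HP i); [lia | assumption]]].
  - intros Hrel j Hjk HJ. rewrite <- Hts in HJ by lia.
    destruct (Hrel (n - 1 - j) ltac:(lia) ltac:(lia) HJ)
      as [HQj | (i' & Hki' & Hi'j & HPi)].
    + left. apply (HQ j); [lia | assumption].
    + right.
      destruct (mirror_onto (n := n) (i := i') ltac:(lia)) as (i & Hi & ->).
      exists i. split; [lia | split; [lia | apply (HP i); [lia | assumption]]].
Qed.

End PastToFuture.

Section FutureToPast.
Context {n : nat} {t s : nat -> nat} (J : interval) {P P' Q Q' : nat -> Prop}.
Hypothesis Hts : mirror_timing n t s.
Hypothesis HP : mirrors n P P'.
Hypothesis HQ : mirrors n Q Q'.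

Lemma next_prev_mirror (k : nat) : k < n ->
  next_at t n J P k <-> prev_at s J P' (n - 1 - k).
Proof.
  intros Hk.
  rewrite (prev_next_mirror J (mirror_timing_sym Hts) (mirrors_sym HP)),
    mirror_involutive by lia.
  reflexivity.
Qed.

Lemma until_since_mirror (k : nat) : k < n ->
  until_at t n J P Q k <-> since_at s J P' Q' (n - 1 - k).
Proof.
  intros Hk.
  rewrite (since_until_mirror J (mirror_timing_sym Hts) (mirrors_sym HP)
    (mirrors_sym HQ)), mirror_involutive by lia.
  reflexivity.
Qed.

Lemma release_trigger_mirror (k : nat) : k < n ->
  release_at t n J P Q k <-> trigger_at s J P' Q' (n - 1 - k).
Proof.
  intros Hk.
  rewrite (trigger_release_mirror J (mirror_timing_sym Hts) (mirrors_sym HP)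
    (mirrors_sym HQ)), mirror_involutive by lia.
  reflexivity.
Qed.

End FutureToPast.

Definition mirror_val {A : Type} (n : nat) (V : nat -> A -> Prop) : nat -> A -> Prop :=
  fun i => V (n - 1 - i).

Lemma sat_gen_sigma_mirror {A : Type} {n : nat} {t s : nat -> nat}
  (Hts : mirror_timing n t s) (phi : formula A) (H T : nat -> A -> Prop) :
  mirrors n (fun k => sat_gen H T t n k phi)
    (fun k => sat_gen (mirror_val n H) (mirror_val n T) s n k (sigma phi)).
Proof.
  revert H T.
  induction phi as [p | | f IHf g IHg | f IHf g IHg | f IHf g IHg
    | J f IHf | J f IHf g IHg | J f IHf g IHg | J f IHf | J f IHf g IHg
    | J f IHf g IHg]; intros H T k Hk.
  - simpl. unfold mirror_val. rewrite mirror_involutive by lia. reflexivity.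
  - reflexivity.
  - simpl. rewrite (IHf H T k Hk), (IHg H T k Hk), (IHf T T k Hk), (IHg T T k Hk).
    reflexivity.
  - simpl. rewrite (IHf H T k Hk), (IHg H T k Hk). reflexivity.
  - simpl. rewrite (IHf H T k Hk), (IHg H T k Hk). reflexivity.
  - exact (prev_next_mirror J Hts (IHf H T) k Hk).
  - exact (since_until_mirror J Hts (IHf H T) (IHg H T) k Hk).
  - exact (trigger_release_mirror J Hts (IHf H T) (IHg H T) k Hk).
  - exact (next_prev_mirror J Hts (IHf H T) k Hk).
  - exact (until_since_mirror J Hts (IHf H T) (IHg H T) k Hk).
  - exact (release_trigger_mirror J Hts (IHf H T) (IHg H T) k Hk).
Qed.

Definition mirror_time (n : nat) (t : nat -> nat) (i : nat) : nat :=
  t (n - 1) - t (n - 1 - i).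

Lemma mirror_time_mirror_timing {n : nat} {t : nat -> nat} :
  (forall i j, i <= j -> j < n -> t i <= t j) ->
  mirror_timing n t (mirror_time n t).
Proof.
  intros Hmono j k Hjk Hkn. unfold mirror_time.
  rewrite !mirror_involutive by lia.
  pose proof (Hmono j k Hjk Hkn). pose proof (Hmono k (n - 1) ltac:(lia) ltac:(lia)).
  lia.
Qed.

Definition mirror_trace {A : Type} (M : trace A) : trace A :=
  Trace (len M) (mirror_val (len M) (Hs M)) (mirror_val (len M) (Ts M))
    (mirror_time (len M) (tau M)).

Lemma valid_trace_tau_mono {A : Type} {M : trace A} : valid_trace M ->
  forall i j, i <= j -> j < len M -> tau M i <= tau M j.
Proof.
  intros (_ & _ & Hstep) i j Hij. induction Hij as [| j Hij IH]; intros Hj.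
  - lia.
  - pose proof (IH ltac:(lia)). pose proof (Hstep j ltac:(lia)).
    rewrite Nat.add_1_r in *. lia.
Qed.

Lemma valid_mirror_trace {A : Type} (M : trace A) :
  valid_trace M -> valid_trace (mirror_trace M).
Proof.
  intros HM. pose proof (valid_trace_tau_mono HM) as Hmono.
  destruct HM as (HHT & _ & _). unfold mirror_trace, mirror_val, mirror_time.
  split; [| split]; simpl.
  - intros i Hi. apply HHT. lia.
  - intros _. rewrite Nat.sub_0_r. apply Nat.sub_diag.
  - intros i Hi.
    pose proof (Hmono (len M - 1 - (i + 1)) (len M - 1 - i) ltac:(lia) ltac:(lia)).
    lia.
Qed.

Theorem lemma1 (A : Type) :
  exists rho : trace A -> trace A,
    forall M : trace A, valid_trace M ->
      valid_trace (rho M) /\ len (rho M) = len M /\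
      forall (phi : formula A) (k : nat), k < len M ->
        (sat M k phi <-> sat (rho M) (len M - 1 - k) (sigma phi)).
Proof.
  exists mirror_trace. intros M HM.
  split; [apply valid_mirror_trace, HM | split; [reflexivity |]].
  intros phi k Hk.
  exact (sat_gen_sigma_mirror
    (mirror_time_mirror_timing (valid_trace_tau_mono HM)) phi (Hs M) (Ts M) k Hk).
Qed.
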